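(* Let $n\ge 2$ and $N\ge 1$ be integers and let $p$ be a prime with $p\mid N$. Then \[ Z_n(N,p)=\frac{n!}{N}\sum_{\substack{1\le u_1<u_2<\dots<u_{n-1}<N\\ u_1,\;u_2-u_1,\;\dots,\;u_{n-1}-u_{n-2},\;u_{n-1}\in\mathcal P_p}}\frac{1}{u_1u_2\cdots u_{n-1}} . \] (Since $p\mid N$, the condition $u_{n-1}\in\mathcal P_p$ is equivalent to $N-u_{n-1}\in\mathcal P_p$.)
   Context: For a prime $p$, $\mathcal P_p$ denotes the set of positive integers not divisible by $p$. For integers $n,N\ge1$ with $p\mid N$, $Z_n(N,p):=\sum \frac{1}{l_1l_2\cdots l_n}$, the sum over all $(l_1,\dots,l_n)\in\mathcal P_p^n$ with $l_1+\dots+l_n=N$. *)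

From HB Require Import structures.
From mathcomp Require Import all_boot all_order all_algebra.
Set Implicit Arguments. Unset Strict Implicit. Unset Printing Implicit Defensive.
Import Order.TTheory GRing.Theory Num.Theory.
Local Open Scope ring_scope.

Definition inPp (p l : nat) : bool := (0 < l)%N && ~~ (p %| l)%N.

(* Z_n(N,p) = sum over (l_1,...,l_n) in P_p^n with l_1+...+l_n = N of 1/(l_1...l_n).
   Each l_i lies in [1,N], so we range over l : {ffun 'I_n -> 'I_N.+1}. *)
Definition Z (n N p : nat) : rat :=
  \sum_(l : {ffun 'I_n -> 'I_N.+1} |
          [forall i, inPp p (l i)] && ((\sum_i (l i : nat))%N == N))
     (\prod_i ((l i : nat)%:R)^-1).

Definition useq (m N : nat) (u : {ffun 'I_m -> 'I_N}) : seq nat :=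
  [seq (nat_of_ord (u j)) | j <- enum 'I_m].

Definition prev_u (m N : nat) (u : {ffun 'I_m -> 'I_N}) (i : 'I_m) : nat :=
  if (i : nat) is k.+1 then nth 0%N (useq u) k else 0%N.

(* The right-hand sum of Lemma 2.1: over 1 <= u_1 < ... < u_{m} < N (m = n-1),
   with u_1, u_2-u_1, ..., u_m-u_{m-1}, u_m all in P_p, of 1/(u_1...u_m). *)
Definition RHS_sum (m N p : nat) : rat :=
  \sum_(u : {ffun 'I_m -> 'I_N} |
          [forall i, (prev_u u i < u i)%N && inPp p (u i - prev_u u i)]
          && [forall i : 'I_m, ((i : nat) == m.-1) ==> inPp p (u i)])
     (\prod_i ((u i : nat)%:R)^-1).

From HB Require Import structures.
From mathcomp Require Import all_boot all_order all_algebra perm zify.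
Import Order.TTheory GRing.Theory Num.Theory.
Set Implicit Arguments. Unset Strict Implicit. Unset Printing Implicit Defensive.
Local Open Scope ring_scope.

(* Let F_n(M) be the sum of 1/(l_1 ... l_n) over the compositions l of M into n parts
   taken from a set A of positive integers, and G_n(M) the same sum with 1/(l_1 ... l_n)
   replaced by 1/(s_1 ... s_n), where s_k = l_1 + ... + l_k. Splitting off the last part,
   M F_{n+1}(M) = (n+1) sum_x F_n(M - x) (because M = sum_j l_j and F is symmetric in the
   parts), while G_{n+1}(M) = M^-1 sum_x G_n(M - x) (because s_{n+1} = M); hence
   F_n = n! G_n. For A = P_p and p | N, the map l |-> (s_1, ..., s_{n-1}) is a bijection
   from the compositions of N onto the sequences u of the right-hand side (the last part
   N - u_{n-1} lies in P_p exactly when u_{n-1} does), and s_n = N gives the factor 1/N. *)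

Section FfunSnoc.
Variables (T : finType) (n : nat).

Definition fsnoc (l : {ffun 'I_n -> T}) (x : T) : {ffun 'I_n.+1 -> T} :=
  [ffun i => if unlift ord_max i is Some j then l j else x].

Lemma fsnoc_max l x : fsnoc l x ord_max = x.
Proof. by rewrite ffunE unlift_none. Qed.

Lemma fsnoc_lift l x j : fsnoc l x (lift ord_max j) = l j.
Proof. by rewrite ffunE liftK. Qed.

Lemma fsnoc_widen l x j : fsnoc l x (widen_ord (leqnSn n) j) = l j.
Proof.
have -> : widen_ord (leqnSn n) j = lift ord_max j by apply/val_inj/esym/lift_max.
exact: fsnoc_lift.
Qed.

Lemma forall_fsnoc (P : pred T) l x :
  [forall i, P (fsnoc l x i)] = [forall j, P (l j)] && P x.
Proof.
apply/forallP/andP => [H | [/forallP H Px] i].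
  split; last by have := H ord_max; rewrite fsnoc_max.
  by apply/forallP => j; have := H (lift ord_max j); rewrite fsnoc_lift.
by case: (unliftP ord_max i) => [j ->|->]; rewrite ?fsnoc_lift ?fsnoc_max.
Qed.

Lemma sum_fsnoc (f : T -> nat) l x :
  (\sum_i f (fsnoc l x i) = \sum_j f (l j) + f x)%N.
Proof.
by rewrite big_ord_recr /= fsnoc_max; congr addn; apply: eq_bigr => j _; rewrite fsnoc_widen.
Qed.

Lemma big_ffunS (R : Type) (idx : R) (op : Monoid.com_law idx)
    (F : {ffun 'I_n.+1 -> T} -> R) :
  \big[op/idx]_(l : {ffun 'I_n.+1 -> T}) F l =
  \big[op/idx]_(x : T) \big[op/idx]_(l : {ffun 'I_n -> T}) F (fsnoc l x).
Proof.
rewrite pair_big /= (reindex (fun q : T * {ffun 'I_n -> T} => fsnoc q.2 q.1)) //.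
apply: onW_bij.
exists (fun l : {ffun 'I_n.+1 -> T} => (l ord_max, [ffun j => l (lift ord_max j)])).
  move=> [x l] /=; rewrite fsnoc_max; congr pair.
  by apply/ffunP => j; rewrite ffunE fsnoc_lift.
move=> l; apply/ffunP => i.
by case: (unliftP ord_max i) => [j ->|->]; rewrite ?fsnoc_lift ?fsnoc_max ?ffunE.
Qed.

End FfunSnoc.

Definition psum n (f : 'I_n -> nat) (k : nat) : nat := (\sum_(i < n | i <= k) f i)%N.

Lemma psumE n (f : 'I_n -> nat) (i : 'I_n) :
  psum f i = (f i + (if (i : nat) is k.+1 then psum f k else 0))%N.
Proof.
rewrite /psum (bigD1 i) //=; congr addn; case: i => [[|k] hk] /=.
  by apply: big_pred0 => j; rewrite -val_eqE /= leqn0 andbN.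
by apply: eq_bigl => j; rewrite -val_eqE /= -[(j <= k)%N]ltnS ltn_neqAle andbC.
Qed.

Lemma psum_full n (f : 'I_n.+1 -> nat) : psum f n = (\sum_i f i)%N.
Proof. by apply: eq_bigl => i; rewrite -ltnS ltn_ord. Qed.

Lemma psum_mono n (f : 'I_n -> nat) : {homo psum f : k k' / (k <= k')%N}.
Proof.
move=> k k' hk; rewrite /psum big_mkcond [X in (_ <= X)%N]big_mkcond /=.
by apply: leq_sum => i _; case: ifP => // hi; rewrite (leq_trans hi hk).
Qed.

Lemma psum_telescope n (f : 'I_n -> nat) (v : nat -> nat) :
  (forall i : 'I_n, f i + (if (i : nat) is k.+1 then v k else 0) = v i)%N ->
  forall i : 'I_n, psum f i = v i.
Proof.
move=> Hv [i hi] /=; rewrite (psumE f (Ordinal hi)) -(Hv (Ordinal hi)) /=.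
elim: i hi => [|k IHk] hi //=.
by rewrite (psumE f (Ordinal (ltnW hi))) IHk (Hv (Ordinal (ltnW hi))).
Qed.

Lemma psum_fsnoc (T : finType) n (f : T -> nat) (l : {ffun 'I_n -> T}) x k :
  (k < n)%N -> psum (fun i => f (fsnoc l x i)) k = psum (fun i => f (l i)) k.
Proof.
move=> hk; rewrite /psum big_mkcond big_ord_recr /= leqNgt hk addn0 [RHS]big_mkcond.
by apply: eq_bigr => i _; rewrite fsnoc_widen.
Qed.

Section Compositions.
Variables (A : pred nat) (B : nat).
Hypothesis A_gt0 : forall x, A x -> (0 < x)%N.

Definition composition n M (l : {ffun 'I_n -> 'I_B.+1}) : bool :=
  [forall i, A (l i)] && (\sum_i (l i : nat) == M)%N.

Definition sum_inv_prod n M : rat :=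
  \sum_(l : {ffun 'I_n -> 'I_B.+1} | composition M l) \prod_i ((l i : nat)%:R)^-1.

Definition sum_inv_psum n M : rat :=
  \sum_(l : {ffun 'I_n -> 'I_B.+1} | composition M l)
     \prod_(k < n) ((psum (fun i => (l i : nat)) k)%:R)^-1.

Lemma composition_gt0 n M (l : {ffun 'I_n -> 'I_B.+1}) i : composition M l -> (0 < l i)%N.
Proof. by case/andP => /forallP /(_ i) /A_gt0. Qed.

Lemma composition_sum n M (l : {ffun 'I_n -> 'I_B.+1}) :
  composition M l -> (\sum_i (l i : nat))%N = M.
Proof. by case/andP => _ /eqP. Qed.

Lemma composition0 n (l : {ffun 'I_n.+1 -> 'I_B.+1}) : composition 0 l = false.
Proof.
apply/negP => hl; have := composition_gt0 ord0 hl.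
by move/eqP: (composition_sum hl); rewrite sum_nat_eq0 => /forallP/(_ ord0)/eqP ->.
Qed.

Lemma composition_fsnoc n M (l : {ffun 'I_n -> 'I_B.+1}) x :
  composition M (fsnoc l x) = [&& A x, (x <= M)%N & composition (M - x)%N l].
Proof.
rewrite /composition (forall_fsnoc (fun y : 'I_B.+1 => A y)) sum_fsnoc.
case: [forall j, A (l j)]; case: (A x); rewrite ?andbF //=.
by apply/eqP/andP => [h|[h1 /eqP h2]]; [split; [|apply/eqP]|]; lia.
Qed.

Lemma composition_perm n M (l : {ffun 'I_n -> 'I_B.+1}) (s : 'S_n) :
  composition M [ffun i => l (s i)] = composition M l.
Proof.
congr andb.
  apply/forallP/forallP => H i; last by rewrite ffunE.
  by have := H (s^-1 i)%g; rewrite ffunE permKV.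
by rewrite [in RHS](reindex_inj (@perm_inj _ s)); under eq_bigr do rewrite ffunE.
Qed.

Lemma big_composition_snoc n M (F : {ffun 'I_n.+1 -> 'I_B.+1} -> rat) :
  \sum_(l : {ffun 'I_n.+1 -> 'I_B.+1} | composition M l) F l =
  \sum_(x : 'I_B.+1 | A x && (x <= M)%N)
     \sum_(l : {ffun 'I_n -> 'I_B.+1} | composition (M - x)%N l) F (fsnoc l x).
Proof.
rewrite big_mkcond big_ffunS [RHS]big_mkcond; apply: eq_bigr => x _ /=.
case: ifP => hx.
  by rewrite [RHS]big_mkcond; apply: eq_bigr => l _; rewrite composition_fsnoc andbA hx.
by rewrite big1 // => l _; rewrite composition_fsnoc andbA hx.
Qed.

(* Reindex by the transposition of j and the last index. *)
Lemma sum_part_inv_prod n M (j : 'I_n.+1) :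
  \sum_(l : {ffun 'I_n.+1 -> 'I_B.+1} | composition M l)
     ((l j : nat)%:R * \prod_i ((l i : nat)%:R)^-1) =
  \sum_(l : {ffun 'I_n.+1 -> 'I_B.+1} | composition M l)
     ((l ord_max : nat)%:R * \prod_i ((l i : nat)%:R : rat)^-1).
Proof.
pose t := tperm j ord_max.
pose h (l : {ffun 'I_n.+1 -> 'I_B.+1}) : {ffun 'I_n.+1 -> 'I_B.+1} := [ffun i => l (t i)].
have hK : involutive h by move=> l; apply/ffunP => i; rewrite !ffunE tpermK.
rewrite (reindex_inj (inv_inj hK)); apply: eq_big => [l|l _]; first exact: composition_perm.
rewrite ffunE tpermL [in RHS](reindex_inj (@perm_inj _ t)).
by under eq_bigr do rewrite ffunE.
Qed.

Lemma sum_inv_prodS n M :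
  M%:R * sum_inv_prod n.+1 M =
  n.+1%:R * \sum_(x : 'I_B.+1 | A x && (x <= M)%N) sum_inv_prod n (M - x)%N.
Proof.
have split_M : M%:R * sum_inv_prod n.+1 M =
    \sum_j \sum_(l : {ffun 'I_n.+1 -> 'I_B.+1} | composition M l)
      ((l j : nat)%:R * \prod_i ((l i : nat)%:R)^-1).
  rewrite mulr_sumr exchange_big; apply: eq_bigr => l hl.
  by rewrite -mulr_suml -natr_sum (composition_sum hl).
rewrite split_M (eq_bigr _ (fun j _ => sum_part_inv_prod M j)) sumr_const card_ord.
rewrite mulr_natl big_composition_snoc; congr (_ *+ _); apply: eq_bigr => x /andP [Ax _].
apply: eq_bigr => l hl; rewrite big_ord_recr /= !fsnoc_max mulrCA mulfV ?mulr1.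
  by apply: eq_bigr => i _; rewrite fsnoc_widen.
by rewrite pnatr_eq0 -lt0n A_gt0.
Qed.

Lemma sum_inv_psum_last n M :
  sum_inv_psum n.+1 M =
  (M%:R)^-1 * \sum_(l : {ffun 'I_n.+1 -> 'I_B.+1} | composition M l)
                 \prod_(k < n) ((psum (fun i => (l i : nat)) k)%:R)^-1.
Proof.
rewrite mulr_sumr; apply: eq_bigr => l hl.
by rewrite big_ord_recr /= psum_full (composition_sum hl) mulrC.
Qed.

Lemma sum_inv_psumS n M :
  sum_inv_psum n.+1 M =
  (M%:R)^-1 * \sum_(x : 'I_B.+1 | A x && (x <= M)%N) sum_inv_psum n (M - x)%N.
Proof.
rewrite sum_inv_psum_last big_composition_snoc; congr (_ * _); apply: eq_bigr => x _.
by apply: eq_bigr => l _; apply: eq_bigr => k _; rewrite psum_fsnoc.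
Qed.

Lemma sum_inv_prod_fact n M : sum_inv_prod n M = n`!%:R * sum_inv_psum n M.
Proof.
elim: n M => [|n IHn] M.
  by rewrite mul1r; apply: eq_bigr => l _; rewrite !big_ord0.
case: M => [|M].
  by rewrite /sum_inv_prod /sum_inv_psum !big_pred0 ?mulr0 // => l; rewrite composition0.
apply: (@mulfI _ M.+1%:R); first by rewrite pnatr_eq0.
rewrite sum_inv_prodS sum_inv_psumS (eq_bigr _ (fun x _ => IHn _)) -mulr_sumr factS natrM.
by rewrite [RHS]mulrCA mulVKf ?pnatr_eq0 // mulrA.
Qed.

End Compositions.

Lemma prev_uE m N (u : {ffun 'I_m.+1 -> 'I_N}) (i : 'I_m.+1) :
  prev_u u i = if (i : nat) is k.+1 then (u (inord k) : nat) else 0%N.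
Proof.
rewrite /prev_u; case: i => [[|k] hk] //=.
rewrite /useq (nth_map ord0) ?size_enum_ord 1?ltnW //.
have -> // : nth ord0 (enum 'I_m.+1) k = inord k.
by apply: val_inj; rewrite /= nth_enum_ord ?inordK // ltnW.
Qed.

Section Admissible.
Variables (p N' m' : nat).
Hypothesis p_dvd_N : (p %| N'.+1)%N.
Local Notation N := N'.+1.
Local Notation m := m'.+1.

Definition admissible (u : {ffun 'I_m -> 'I_N}) : bool :=
  [forall i, (prev_u u i < u i)%N && inPp p (u i - prev_u u i)]
  && [forall i : 'I_m, ((i : nat) == m.-1) ==> inPp p (u i)].

Definition gaps (u : {ffun 'I_m -> 'I_N}) : {ffun 'I_m -> 'I_N.+1} :=
  [ffun j => inord (u j - prev_u u j)].

Definition composition_of (u : {ffun 'I_m -> 'I_N}) : {ffun 'I_m.+1 -> 'I_N.+1} :=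
  fsnoc (gaps u) (inord (N - u ord_max)).

Definition partial_sums (l : {ffun 'I_m.+1 -> 'I_N.+1}) : {ffun 'I_m -> 'I_N} :=
  [ffun k : 'I_m => inord (psum (fun i => (l i : nat)) k)].

Lemma gapsE u j : (gaps u j : nat) = (u j - prev_u u j)%N.
Proof. by rewrite ffunE inordK // ltnS (leq_trans (leq_subr _ _)) // ltnW. Qed.

Lemma psum_gaps u : [forall i, (prev_u u i < u i)%N] ->
  forall i : 'I_m, psum (fun j => (gaps u j : nat)) i = u i.
Proof.
move/forallP => u_incr i.
rewrite (@psum_telescope _ _ (fun k => (u (inord k) : nat))) ?inord_val // => j.
by rewrite gapsE -prev_uE inord_val subnK // ltnW.
Qed.

Lemma admissible_increasing u : admissible u -> [forall i, (prev_u u i < u i)%N].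
Proof. by case/andP => /forallP u_adm _; apply/forallP => i; case/andP: (u_adm i). Qed.

Lemma sum_gaps u : [forall i, (prev_u u i < u i)%N] ->
  (\sum_j (gaps u j : nat))%N = u ord_max.
Proof. by move=> u_incr; rewrite -psum_full; exact: (psum_gaps u_incr ord_max). Qed.

Lemma composition_of_admissible u :
  composition (inPp p) N (composition_of u) = admissible u.
Proof.
have u_max_lt := ltn_ord (u ord_max).
rewrite composition_fsnoc (inordK (n' := N)) ?ltnS ?leq_subr //= subKn 1?ltnW //.
have last_inPp : inPp p (N - u ord_max) = inPp p (u ord_max).
  rewrite /inPp subn_gt0 u_max_lt (dvdn_subr (ltnW u_max_lt)) //.
  by case: posnP => [->|]; rewrite ?dvdn0.
rewrite last_inPp /composition /admissible.
apply/idP/idP.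
- case/and3P => [u_max_inPp /forallP gaps_inPp _].
  have u_incr i : (prev_u u i < u i)%N.
    by have := gaps_inPp i; rewrite gapsE /inPp subn_gt0 => /andP [].
  apply/andP; split.
    by apply/forallP => i; rewrite u_incr -gapsE gaps_inPp.
  by apply/forallP => i; apply/implyP => /eqP i_max; rewrite (_ : i = ord_max) //; apply: val_inj.
- case/andP => [/forallP u_adm /forallP u_last].
  have u_incr : [forall i, (prev_u u i < u i)%N].
    by apply/forallP => i; case/andP: (u_adm i).
  apply/and3P; split.
  + by have := u_last ord_max; rewrite eqxx.
  + by apply/forallP => i; rewrite gapsE; case/andP: (u_adm i).
  + by rewrite sum_gaps.
Qed.

Lemma composition_ofK u : admissible u -> partial_sums (composition_of u) = u.
Proof.
move=> u_adm; apply/ffunP => k; rewrite ffunE psum_fsnoc //.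
by rewrite (psum_gaps (admissible_increasing u_adm)) inord_val.
Qed.

Lemma partial_sumsK l :
  composition (inPp p) N l -> composition_of (partial_sums l) = l.
Proof.
move=> l_comp; set s := psum (fun i => (l i : nat)).
have s_max : s m = N by rewrite /s psum_full (composition_sum l_comp).
have s_last : s m = (l ord_max + s m')%N by rewrite /s (psumE _ ord_max).
have l_last_gt0 : (0 < l ord_max)%N by apply: composition_gt0 l_comp => x /andP [].
have s_lt k : (k <= m')%N -> (s k < N)%N.
  by move=> k_le; have := psum_mono (fun i => (l i : nat)) k_le; rewrite -/s; lia.
have sumsE (k : 'I_m) : (partial_sums l k : nat) = s k.
  by rewrite ffunE inordK // s_lt // -ltnS.
have prevE (j : 'I_m) : prev_u (partial_sums l) j = if (j : nat) is k.+1 then s k else 0%N.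
  by case: j => [[|k] hk] //; rewrite prev_uE /= sumsE inordK // ltnW.
apply/ffunP => i; apply: val_inj; case: (unliftP ord_max i) => [j ->|->] /=.
- rewrite fsnoc_lift gapsE sumsE prevE.
  have := psumE (fun i => (l i : nat)) (lift ord_max j); rewrite lift_max -/s => ->.
  by case: j => [[|k] hk] /=; lia.
- by rewrite fsnoc_max inordK sumsE /=; lia.
Qed.

Lemma sum_inv_psum_admissible :
  \sum_(l : {ffun 'I_m.+1 -> 'I_N.+1} | composition (inPp p) N l)
     \prod_(k < m) ((psum (fun i => (l i : nat)) k)%:R : rat)^-1
  = RHS_sum m N p.
Proof.
rewrite (reindex composition_of); last first.
  exists partial_sums => [u|l]; rewrite inE => h; last exact: partial_sumsK.
  by apply: composition_ofK; rewrite -composition_of_admissible.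
apply: eq_big => u; first exact: composition_of_admissible.
move=> u_adm; apply: eq_bigr => k _; rewrite psum_fsnoc //.
by rewrite (psum_gaps (admissible_increasing _)) // -composition_of_admissible.
Qed.

End Admissible.

Theorem lemma2p1 (n N p : nat) (hn : (2 <= n)%N) (hN : (1 <= N)%N)
  (hp : prime p) (hpN : (p %| N)%N) :
  Z n N p = (n`!)%:R / N%:R * RHS_sum n.-1 N p.
Proof.
case: n hn => [|[|m]] // _; case: N hN hpN => [|N] // _ hpN.
have inPp_gt0 x : inPp p x -> (0 < x)%N by case/andP.
rewrite -[LHS]/(sum_inv_prod (inPp p) N.+1 m.+2 N.+1) sum_inv_prod_fact //.
by rewrite sum_inv_psum_last sum_inv_psum_admissible // mulrA.
Qed.
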